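(* Let $\gamma>0$, let $\Pi\subseteq\mathbb R^d$ be closed and convex with $0\in\Pi$, let $\theta:\mathbb R^d\to\mathbb R^d$, and define $F(v,z):=\frac12\gamma^2\,\mathrm{dist}^2\{\Pi,\frac{z+\theta(v)}{\gamma}\}-\frac12|z+\theta(v)|^2+\frac12|z|^2$, $G(v,z,\bar z):=\frac1\gamma(F(v,z+\gamma\bar z)-F(v,z))$, and $G^*(v,z,q):=\sup_{\bar z\in\mathbb R^d}(\bar z^{tr}q-G(v,z,\bar z))\in\mathbb R\cup\{\infty\}$. Then: (i) for all $v,z,\bar z\in\mathbb R^d$, $$-\gamma|\bar z|^2-\frac2\gamma(|z|^2+|\theta(v)|^2)\le G(v,z,\bar z)\le\gamma|\bar z|^2+\frac2\gamma(|z|^2+|\theta(v)|^2);$$ (ii) for every $(v,z)$, $q\mapsto G^*(v,z,q)$ is convex; (iii) for all $v,z,q\in\mathbb R^d$, $$G^*(v,z,q)\ge\max\Big\{0,\ \frac{|q|^2}{4\gamma}-\frac2\gamma(|z|^2+|\theta(v)|^2)\Big\}.$$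
   Context: $\mathrm{dist}\{\Pi,x\}$ denotes the Euclidean distance from $x\in\mathbb R^d$ to the set $\Pi$. *)

From HB Require Import structures.
From mathcomp Require Import all_boot all_order all_algebra.
From mathcomp Require Import all_classical all_reals all_analysis.
Set Implicit Arguments. Unset Strict Implicit. Unset Printing Implicit Defensive.
Import Order.TTheory GRing.Theory Num.Theory.
Import numFieldNormedType.Exports.
Local Open Scope classical_set_scope.
Local Open Scope ring_scope.

Section Defs.
Variables (R : realType) (d : nat).

Definition dotv (u v : 'rV[R]_d) : R := \sum_(i < d) u 0 i * v 0 i.

Definition enorm (u : 'rV[R]_d) : R := Num.sqrt (dotv u u).

Definition dist_set (Pi : set 'rV[R]_d) (x : 'rV[R]_d) : R :=
  inf [set enorm (x - y) | y in Pi].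

Definition convex_set_rV (Pi : set 'rV[R]_d) : Prop :=
  forall x y t, Pi x -> Pi y -> 0 <= t <= 1 -> Pi (t *: x + (1 - t) *: y).

Definition Ffun (gamma : R) (Pi : set 'rV[R]_d) (theta : 'rV[R]_d -> 'rV[R]_d)
  (v z : 'rV[R]_d) : R :=
  2^-1 * gamma ^+ 2 * (dist_set Pi (gamma^-1 *: (z + theta v))) ^+ 2
  - 2^-1 * enorm (z + theta v) ^+ 2 + 2^-1 * enorm z ^+ 2.

Definition Gfun gamma Pi theta (v z zb : 'rV[R]_d) : R :=
  gamma^-1 * (Ffun gamma Pi theta v (z + gamma *: zb) - Ffun gamma Pi theta v z).

Definition Gstar gamma Pi theta (v z q : 'rV[R]_d) : \bar R :=
  ereal_sup [set ((dotv zb q - Gfun gamma Pi theta v z zb)%:E) | zb in [set: 'rV[R]_d]].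

Definition convex_fun_ext (f : 'rV[R]_d -> \bar R) : Prop :=
  forall (q1 q2 : 'rV[R]_d) (t : R), 0 <= t <= 1 ->
    (f (t *: q1 + (1 - t) *: q2)%R <= t%:E * f q1 + (1 - t)%:E * f q2)%E.

End Defs.

From HB Require Import structures.
From mathcomp Require Import all_boot all_order all_algebra.
From mathcomp Require Import all_classical all_reals all_analysis.
From mathcomp Require Import ring lra.
Import Order.TTheory GRing.Theory Num.Theory.
Import numFieldNormedType.Exports.
Local Open Scope classical_set_scope.
Local Open Scope ring_scope.

(* Since 0 lies in Pi, 0 <= gamma^2 dist^2{Pi, (z + theta v)/gamma} <= |z + theta v|^2, so
   F(v, z) lies between |z|^2/2 - |z + theta v|^2/2 and |z|^2/2; the bounds on G are these
   bounds combined with 2ab <= a^2 + b^2.  G^* is a supremum of affine functions of q, hence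
   convex; testing the supremum at zb = 0 (where G vanishes) and at zb = q/(2 gamma) (with
   the quadratic upper bound on G) gives the two lower bounds on G^*. *)

Set Implicit Arguments. Unset Strict Implicit.

Section InnerProduct.
Variables (R : realType) (d : nat).
Implicit Types (u v w : 'rV[R]_d).

Lemma dotvC u v : dotv u v = dotv v u.
Proof. by apply: eq_bigr => i _; rewrite mulrC. Qed.

Lemma dotvDl u v w : dotv (u + v) w = dotv u w + dotv v w.
Proof. by rewrite /dotv -big_split; apply: eq_bigr => i _; rewrite mxE mulrDl. Qed.

Lemma dotvDr u v w : dotv w (u + v) = dotv w u + dotv w v.
Proof. by rewrite dotvC dotvDl !(dotvC w). Qed.

Lemma dotvZl (a : R) u v : dotv (a *: u) v = a * dotv u v.
Proof. by rewrite /dotv mulr_sumr; apply: eq_bigr => i _; rewrite mxE mulrA. Qed.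

Lemma dotvZr (a : R) u v : dotv v (a *: u) = a * dotv v u.
Proof. by rewrite dotvC dotvZl dotvC. Qed.

Lemma dotvNl u v : dotv (- u) v = - dotv u v.
Proof. by rewrite -scaleN1r dotvZl mulN1r. Qed.

Lemma dotvNr u v : dotv v (- u) = - dotv v u.
Proof. by rewrite dotvC dotvNl dotvC. Qed.

Lemma dotv0l v : dotv 0 v = 0.
Proof. by rewrite -(scale0r 0) dotvZl mul0r. Qed.

Lemma dotvv_ge0 u : 0 <= dotv u u.
Proof. by apply: sumr_ge0 => i _; rewrite -expr2 sqr_ge0. Qed.

Lemma enorm_ge0 u : 0 <= enorm u.
Proof. exact: sqrtr_ge0. Qed.

Lemma enorm_sqr u : enorm u ^+ 2 = dotv u u.
Proof. by rewrite /enorm sqr_sqrtr // dotvv_ge0. Qed.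

Lemma enormZ_sqr (a : R) u : enorm (a *: u) ^+ 2 = a ^+ 2 * enorm u ^+ 2.
Proof. by rewrite !enorm_sqr dotvZl dotvZr mulrA -expr2. Qed.

End InnerProduct.

Section Distance.
Variables (R : realType) (d : nat) (Pi : set 'rV[R]_d).
Implicit Types (x y : 'rV[R]_d).

Let dist_lbound x : lbound [set enorm (x - y) | y in Pi] 0.
Proof. by move=> _ [y _ <-]; exact: enorm_ge0. Qed.

Lemma dist_set_ge0 x : Pi !=set0 -> 0 <= dist_set Pi x.
Proof.
move=> [y Piy]; apply: lb_le_inf; last exact: dist_lbound.
by exists (enorm (x - y)), y.
Qed.

Lemma dist_set_le x y : Pi y -> dist_set Pi x <= enorm (x - y).
Proof. by move=> Piy; apply: ge_inf; [exists 0; exact: dist_lbound | exists y]. Qed.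

Lemma dist_set_sqr_le x : Pi 0 -> dist_set Pi x ^+ 2 <= enorm x ^+ 2.
Proof.
move=> Pi0; have dist_ge0 : 0 <= dist_set Pi x by apply: dist_set_ge0; exists 0.
by rewrite lerXn2r ?nnegrE ?enorm_ge0 // -[x in enorm x]subr0 dist_set_le.
Qed.

End Distance.

Section Conjugate.
Variables (R : realType) (d : nat).
Implicit Types (g : 'rV[R]_d -> R) (q x : 'rV[R]_d).

Definition conjugate g q : \bar R :=
  ereal_sup [set (dotv x q - g x)%:E | x in [set: 'rV[R]_d]].

Lemma conjugate_ge g x q : ((dotv x q - g x)%:E <= conjugate g q)%E.
Proof. by apply: ereal_sup_ubound; exists x. Qed.

Lemma conjugate_convex g : convex_fun_ext (conjugate g).
Proof.
move=> q1 q2 t /andP[t_ge0 t_le1]; apply/ereal_supP => _ [x _ <-].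
have -> : dotv x (t *: q1 + (1 - t) *: q2) - g x
    = t * (dotv x q1 - g x) + (1 - t) * (dotv x q2 - g x).
  by rewrite dotvDr !dotvZr; ring.
rewrite EFinD !EFinM.
by apply: leeD; apply: lee_wpmul2l; rewrite ?lee_fin ?subr_ge0 ?conjugate_ge.
Qed.

Lemma conjugate_ge0 g q : g 0 = 0 -> (0 <= conjugate g q)%E.
Proof. by move=> g0; apply: le_trans (conjugate_ge g 0 q); rewrite g0 dotv0l subr0. Qed.

Lemma conjugate_ge_quadratic g (c K : R) q : 0 < c ->
  (forall x, g x <= c * enorm x ^+ 2 + K) ->
  ((enorm q ^+ 2 / (4 * c) - K)%:E <= conjugate g q)%E.
Proof.
move=> c_gt0 g_le; set x := (2 * c)^-1 *: q.
apply: le_trans (conjugate_ge g x q); rewrite lee_fin.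
have := g_le x; rewrite enormZ_sqr /x dotvZl -enorm_sqr.
have c_neq0 : c != 0 by rewrite gt_eqF.
have -> : c * ((2 * c)^-1 ^+ 2 * enorm q ^+ 2) = enorm q ^+ 2 / (4 * c) by field.
have -> : (2 * c)^-1 * enorm q ^+ 2 = 2 * (enorm q ^+ 2 / (4 * c)) by field.
lra.
Qed.

End Conjugate.

Section PenaltyBounds.
Variables (R : realType) (d : nat) (gamma : R) (Pi : set 'rV[R]_d).
Variable theta : 'rV[R]_d -> 'rV[R]_d.
Hypotheses (gamma_gt0 : 0 < gamma) (Pi0 : Pi 0).
Implicit Types (v z zb : 'rV[R]_d).

Let F := Ffun gamma Pi theta.
Let G := Gfun gamma Pi theta.

Lemma Ffun_bounds v z :
  2^-1 * enorm z ^+ 2 - 2^-1 * enorm (z + theta v) ^+ 2 <= F v z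
  <= 2^-1 * enorm z ^+ 2.
Proof.
set w := z + theta v.
have dist_ge0 : 0 <= gamma ^+ 2 * dist_set Pi (gamma^-1 *: w) ^+ 2.
  by rewrite mulr_ge0 ?sqr_ge0.
have dist_le : gamma ^+ 2 * dist_set Pi (gamma^-1 *: w) ^+ 2 <= enorm w ^+ 2.
  rewrite -[leRHS](@mulVKf _ (gamma ^+ 2)) ?sqrf_eq0 ?gt_eqF // -exprVn -enormZ_sqr.
  by rewrite ler_wpM2l ?sqr_ge0 ?dist_set_sqr_le.
by rewrite /F /Ffun -/w -!mulrA; apply/andP; split; lra.
Qed.

Lemma Gfun0 v z : G v z 0 = 0.
Proof. by rewrite /G /Gfun scaler0 addr0 subrr mulr0. Qed.

Lemma Gfun_bounds v z zb :
  - gamma * enorm zb ^+ 2 - 2 / gamma * (enorm z ^+ 2 + enorm (theta v) ^+ 2)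
    <= G v z zb /\
  G v z zb <= gamma * enorm zb ^+ 2 + 2 / gamma * (enorm z ^+ 2 + enorm (theta v) ^+ 2).
Proof.
set t := theta v; set y := gamma *: zb.
have /andP[F1_ge F1_le] := Ffun_bounds v (z + y).
have /andP[F0_ge F0_le] := Ffun_bounds v z.
have gamma_neq0 : gamma != 0 by rewrite gt_eqF.
set K := enorm z ^+ 2 + enorm t ^+ 2.
have scaleG : gamma * G v z zb = F v (z + y) - F v z by rewrite /G /Gfun mulrA divff ?mul1r.
have scale_lo : gamma * (- gamma * enorm zb ^+ 2 - 2 / gamma * K) = - enorm y ^+ 2 - 2 * K.
  by rewrite enormZ_sqr; field.
have scale_hi : gamma * (gamma * enorm zb ^+ 2 + 2 / gamma * K) = enorm y ^+ 2 + 2 * K.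
  by rewrite enormZ_sqr; field.
rewrite -[_ <= G v z zb](ler_pM2l gamma_gt0) -[G v z zb <= _](ler_pM2l gamma_gt0).
rewrite scaleG scale_lo scale_hi /K {scaleG scale_lo scale_hi}.
have := dotvv_ge0 z; have := dotvv_ge0 t.
have := dotvv_ge0 (z - y); have := dotvv_ge0 (z - t); have := dotvv_ge0 (y - t).
move: F1_ge F1_le F0_ge F0_le; rewrite -/t !enorm_sqr.
rewrite !(dotvDl, dotvDr, dotvNl, dotvNr) (dotvC t z) (dotvC t y) (dotvC y z).
by move=> *; split; lra.
Qed.

End PenaltyBounds.

Theorem lemma10 (R : realType) (d : nat) (gamma : R) (Pi : set 'rV[R]_d)
  (theta : 'rV[R]_d -> 'rV[R]_d) :
  0 < gamma -> closed Pi -> convex_set_rV Pi -> Pi 0 ->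
  (forall v z zb : 'rV[R]_d,
     - gamma * enorm zb ^+ 2 - 2 / gamma * (enorm z ^+ 2 + enorm (theta v) ^+ 2)
       <= Gfun gamma Pi theta v z zb /\
     Gfun gamma Pi theta v z zb
       <= gamma * enorm zb ^+ 2 + 2 / gamma * (enorm z ^+ 2 + enorm (theta v) ^+ 2))
  /\ (forall v z : 'rV[R]_d, convex_fun_ext (Gstar gamma Pi theta v z))
  /\ (forall v z q : 'rV[R]_d,
       ((Num.max 0 (enorm q ^+ 2 / (4 * gamma)
                     - 2 / gamma * (enorm z ^+ 2 + enorm (theta v) ^+ 2)))%:E
        <= Gstar gamma Pi theta v z q)%E).
Proof.
move=> gamma_gt0 _ _ Pi0.
have G_bounds := Gfun_bounds theta gamma_gt0 Pi0.
split=> //; split=> [v z | v z q]; first exact: conjugate_convex.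
have G_ge0 := conjugate_ge0 q (Gfun0 gamma Pi theta v z).
have G_ge := conjugate_ge_quadratic q gamma_gt0 (fun zb => proj2 (G_bounds v z zb)).
by rewrite maxEle; case: ifP.
Qed.
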